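(* Consider a Markov decision process with state space $\mathcal{S}_{\mathrm{all}}$ and finite action set $\mathcal{A}$ satisfying: (1) the transition distribution is deterministic; (2) every trajectory terminates after finitely many steps; (3) the discount factor is $\gamma=1$; (4) the reward $r(s,a)$ is $0$ for every transition that does not enter termination, and $r(s,a)\in\{L,H\}$ for every terminating transition, where $L<H$ are constants (so the return of every complete trajectory is $L$ or $H$). Let $\mathcal{S}\subseteq\mathcal{S}_{\mathrm{all}}$ be the set of states from which there exists a trajectory with return $H$. Let $\pi_{\mathcal{B}}$ be a behavior policy such that, for every initial state $s\in\mathcal{S}$, the trajectory generated by $\pi_{\mathcal{B}}$ from $s$ has return $H$ with nonzero probability, and let $Q^{\pi_{\mathcal{B}}}$ be its exact action-value function. Then any policy $\pi$ with $\pi(s)\in\arg\max_{a\in\mathcal{A}}Q^{\pi_{\mathcal{B}}}(s,a)$ for all $s$ (ties broken arbitrarily) is optimal: from every initial state $s\in\mathcal{S}$, following $\pi$ yields return $H$ with probability $1$.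
   Context: For a policy $\pi$, $Q^{\pi}(s,a)=\mathbb{E}\big[\sum_{t\ge 0}\gamma^t r(s_t,a_t)\big]$ with $s_0=s$, $a_0=a$, $s_t$ drawn from the transitions and $a_t\sim\pi(\cdot\mid s_t)$ for $t\ge1$; $V^{\pi}(s)=\mathbb{E}_{a\sim\pi(\cdot\mid s)}[Q^{\pi}(s,a)]$. The greedy policy $\pi$ above is the result of one step of policy improvement on $Q^{\pi_{\mathcal{B}}}$. *)

From HB Require Import structures.
From mathcomp Require Import all_boot all_order all_algebra.
From mathcomp Require Import reals.
Set Implicit Arguments. Unset Strict Implicit. Unset Printing Implicit Defensive.
Import Order.TTheory GRing.Theory Num.Theory.
Local Open Scope ring_scope.

(* Deterministic MDP: [step s a = None] means the transition (s,a) enters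
   termination; [step s a = Some s'] means it moves to state s'. *)

Definition succ {S A : Type} (step : S -> A -> option S) (s' s : S) : Prop :=
  exists a, step s a = Some s'.

Section MDP.
Variables (R : realType) (S : Type) (A : finType) (step : S -> A -> option S).
Variable (wf : well_founded (succ step)).

Definition is_policy (pol : S -> A -> R) : Prop :=
  (forall s a, 0 <= pol s a) /\ (forall s, \sum_(a : A) pol s a = 1).

Definition det_policy (pi : S -> A) : S -> A -> R :=
  fun s a => (a == pi s)%:R.

(* Exact (undiscounted, gamma = 1) state value
   V^pol(s) = sum_a pol(a|s) (r(s,a) + [non-terminal] V^pol(s')),
   defined by well-founded recursion (every trajectory terminates). *)
Definition value_body (pol : S -> A -> R) (r : S -> A -> R) (s : S)
  (rec : forall s', succ step s' s -> R) : R :=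
  \sum_(a : A) pol s a *
    (r s a + (match step s a as o return step s a = o -> R with
              | None => fun _ => 0
              | Some s' => fun e => rec s' (ex_intro (fun b => step s b = Some s') a e)
              end erefl)).

Definition value (pol : S -> A -> R) (r : S -> A -> R) : S -> R :=
  Fix wf (fun _ => R) (value_body pol r).

Definition Qfun (pol : S -> A -> R) (r : S -> A -> R) (s : S) (a : A) : R :=
  r s a + match step s a with None => 0 | Some s' => value pol r s' end.

(* Probability, for the trajectory generated by pol from state s having
   already accumulated return c, that the total return equals v. *)
Definition prob_body (pol : S -> A -> R) (r : S -> A -> R) (v : R) (s : S)
  (rec : forall s', succ step s' s -> R -> R) (c : R) : R :=
  \sum_(a : A) pol s a *
    (match step s a as o return step s a = o -> R with
     | None => fun _ => ((c + r s a) == v)%:R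
     | Some s' => fun e => rec s' (ex_intro (fun b => step s b = Some s') a e) (c + r s a)
     end erefl).

Definition prob_return (pol : S -> A -> R) (r : S -> A -> R) (v : R) (s : S) : R :=
  Fix wf (fun _ => R -> R) (prob_body pol r v) s 0.

End MDP.

Inductive traj_return {R : realType} {S : Type} {A : Type}
    (step : S -> A -> option S) (r : S -> A -> R) : S -> R -> Prop :=
| traj_term s a : step s a = None -> traj_return step r s (r s a)
| traj_next s a s' v : step s a = Some s' -> traj_return step r s' v ->
    traj_return step r s (r s a + v).

From HB Require Import structures.
From mathcomp Require Import all_boot all_order all_algebra.
From mathcomp Require Import reals.
From Stdlib Require Import FunctionalExtensionality.
Set Implicit Arguments. Unset Strict Implicit. Unset Printing Implicit Defensive.
Import Order.TTheory GRing.Theory Num.Theory.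
Local Open Scope ring_scope.

(* Since rewards vanish on non-terminal transitions and every
   trajectory ends with reward L or H, the value of any policy is an affine
   image of its success probability:
       V^pol(s) = L + (H - L) * P^pol(return = H | s).
   Hence the hypothesis on the behaviour policy says V^piB(s) > L on every
   state from which H is attainable.  The value V^piB(s) is the piB-average
   of Q^piB(s, .), so it is at most Q^piB(s, pi s) for the greedy action.
   Therefore Q^piB(s, pi s) > L: either pi s terminates, and then with reward
   H (the only reward above L), or it leads to a successor s' with
   V^piB(s') > L, and we conclude by well-founded induction along pi. *)

(* Dependent matches on [step s a] only depend pointwise on their branches;
   this is the extensionality needed to unfold the [Fix] definitions. *)
Lemma match_ext (T S : Type) (st o : option S) (e : st = o) (d : T)
  (F G : forall s', st = Some s' -> T) (hFG : forall s' e, F s' e = G s' e) :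
  match o as o1 return st = o1 -> T with
  | Some s' => fun e => F s' e | None => fun _ => d end e =
  match o as o1 return st = o1 -> T with
  | Some s' => fun e => G s' e | None => fun _ => d end e.
Proof. by case: o e. Qed.

Section DeterministicMDP.
Variables (R : realType) (S : Type) (A : finType) (step : S -> A -> option S).
Variables (wf : well_founded (succ step)) (r : S -> A -> R).

Lemma value_unfold (pol : S -> A -> R) (s : S) :
  value wf pol r s = \sum_(a : A) pol s a * Qfun wf pol r s a.
Proof.
rewrite /value Fix_eq.
  by apply: eq_bigr => a _; rewrite /Qfun; case: (step s a).
move=> x f g hfg; apply: eq_bigr => a _; congr (_ * (_ + _)).
apply: (@match_ext _ _ _ _ erefl _ (fun s' e => f s' (ex_intro _ a e))
                        (fun s' e => g s' (ex_intro _ a e))) => s' e.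
exact: hfg.
Qed.

Definition prob_from (pol : S -> A -> R) (v : R) : S -> R -> R :=
  Fix wf (fun _ => R -> R) (prob_body pol r v).

Lemma prob_from_unfold (pol : S -> A -> R) (v : R) (s : S) (c : R) :
  prob_from pol v s c = \sum_(a : A) pol s a *
    match step s a with
    | None => ((c + r s a) == v)%:R
    | Some s' => prob_from pol v s' (c + r s a)
    end.
Proof.
rewrite /prob_from Fix_eq.
  by apply: eq_bigr => a _; case: (step s a).
move=> x f g hfg; apply: functional_extensionality => c'.
apply: eq_bigr => a _; congr (_ * _).
apply: (@match_ext _ _ _ _ erefl _ (fun s' e => f s' (ex_intro _ a e) _)
                        (fun s' e => g s' (ex_intro _ a e) _)) => s' e.
by rewrite hfg.
Qed.

Lemma sum_det_policy (pi : S -> A) (s : S) (F : A -> R) :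
  \sum_(a : A) det_policy R pi s a * F a = F (pi s).
Proof.
rewrite (bigD1 (pi s)) //= big1 ?addr0; first by rewrite /det_policy eqxx mul1r.
by move=> a /negbTE; rewrite /det_policy => ->; rewrite mul0r.
Qed.

Variables (L H : R).
Hypothesis hLH : L < H.
Hypothesis hr0 : forall s a, step s a <> None -> r s a = 0.
Hypothesis hrT : forall s a, step s a = None -> r s a = L \/ r s a = H.

Lemma value_success_prob (pol : S -> A -> R)
    (hsum : forall s, \sum_(a : A) pol s a = 1) (s : S) :
  value wf pol r s = L + (H - L) * prob_return wf pol r H s.
Proof.
elim: (wf s) => {}s _ IH.
rewrite value_unfold /prob_return -/(prob_from pol H) prob_from_unfold.
rewrite -[X in X + _]mul1r -{1}(hsum s) mulr_suml mulr_sumr -big_split /=.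
apply: eq_bigr => a _; rewrite mulrCA -mulrDr /Qfun; congr (_ * _).
case E: (step s a) => [s'|].
  by rewrite hr0 ?E // !add0r IH //; exists a.
rewrite add0r; case: (hrT E) => ->.
  by rewrite (lt_eqF hLH) mulr0 addr0.
by rewrite eqxx mulr1 addrCA subrr addr0.
Qed.

Lemma greedy_improvement (pol : S -> A -> R) (pi : S -> A)
    (hpol : is_policy pol)
    (hgreedy : forall s a, Qfun wf pol r s a <= Qfun wf pol r s (pi s))
    (s : S) :
  value wf pol r s <= Qfun wf pol r s (pi s).
Proof.
case: hpol => hpos hsum.
rewrite value_unfold -[X in _ <= X]mul1r -(hsum s) mulr_suml.
by apply: ler_sum => a _; apply: ler_wpM2l.
Qed.

Lemma above_L_success (V : S -> R) (pi : S -> A)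
    (hQ : forall s, L < V s ->
      L < r s (pi s) + match step s (pi s) with None => 0 | Some s' => V s' end)
    (s : S) :
  L < V s -> prob_from (det_policy R pi) H s 0 = 1.
Proof.
elim: (wf s) => {}s _ IH /hQ; rewrite prob_from_unfold sum_det_policy.
case E: (step s (pi s)) => [s'|].
  rewrite hr0 ?E // !add0r => hV'.
  by apply: IH => //; exists (pi s).
rewrite addr0 add0r; case: (hrT E) => -> hLr; first by rewrite ltxx in hLr.
by rewrite eqxx.
Qed.

End DeterministicMDP.

Theorem lemma1 (R : realType) (S : Type) (A : finType)
  (step : S -> A -> option S) (wf : well_founded (succ step))
  (r : S -> A -> R) (L H : R) (hLH : L < H)
  (hr0 : forall s a, step s a <> None -> r s a = 0)
  (hrT : forall s a, step s a = None -> r s a = L \/ r s a = H)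
  (piB : S -> A -> R) (hpiB : is_policy piB)
  (hB : forall s, traj_return step r s H -> 0 < prob_return wf piB r H s)
  (pi : S -> A)
  (hgreedy : forall s a, Qfun wf piB r s a <= Qfun wf piB r s (pi s)) :
  forall s, traj_return step r s H -> prob_return wf (det_policy R pi) r H s = 1.
Proof.
move=> s hs.
(* Following pi keeps Q^piB strictly above L along the whole trajectory. *)
apply: (above_L_success wf hr0 hrT (V := value wf piB r)).
  by move=> s' hV; apply: lt_le_trans hV (greedy_improvement hpiB hgreedy s').
(* V^piB(s) > L because piB succeeds from s with positive probability. *)
rewrite (value_success_prob wf hLH hr0 hrT hpiB.2) ltrDl.
by apply: mulr_gt0; [rewrite subr_gt0 | exact: hB].
Qed.
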